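(* Let $S=(x_1,x_2,\dots,x_N)$ be a finite sequence of real numbers. For each term $x_j$ let $i(x_j)$ be the length of the longest strictly increasing subsequence of $S$ containing the term $x_j$, and let $d(x_j)$ be the length of the longest non-increasing subsequence of $S$ containing the term $x_j$ (if the terms are pairwise distinct, this is the longest decreasing subsequence containing $x_j$). Then \[ \sum_{j=1}^N\frac{1}{i(x_j)\,d(x_j)}\le 1. \]
   Context: Subsequences are taken by positions: a subsequence is $(x_{j_1},\dots,x_{j_m})$ with $j_1<\dots<j_m$, and it contains the term $x_j$ if $j\in\{j_1,\dots,j_m\}$. *)

From mathcomp Require Import all_boot all_order all_algebra.
From mathcomp Require Import reals.
Set Implicit Arguments. Unset Strict Implicit. Unset Printing Implicit Defensive.
Import Order.TTheory GRing.Theory Num.Theory.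
Local Open Scope ring_scope.

(* A sequence S = (x_1,...,x_N) is a seq R; positions are 'I_(size S) (0-based),
   x_j = nth 0 S j.  A subsequence is given by its set of positions A. *)

Definition incr_pos (R : realType) (S : seq R) (A : {set 'I_(size S)}) : bool :=
  [forall p in A, forall q in A, (p < q)%N ==> (nth 0 S p < nth 0 S q)].

Definition nonincr_pos (R : realType) (S : seq R) (A : {set 'I_(size S)}) : bool :=
  [forall p in A, forall q in A, (p < q)%N ==> (nth 0 S q <= nth 0 S p)].

Definition ilen (R : realType) (S : seq R) (j : 'I_(size S)) : nat :=
  \max_(A : {set 'I_(size S)} | (j \in A) && incr_pos A) #|A|.

Definition dlen (R : realType) (S : seq R) (j : 'I_(size S)) : nat :=
  \max_(A : {set 'I_(size S)} | (j \in A) && nonincr_pos A) #|A|.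

From mathcomp Require Import all_boot all_order all_algebra.
From mathcomp Require Import reals.
From mathcomp Require Import zify ring.
Import Order.TTheory GRing.Theory Num.Theory.
Set Implicit Arguments. Unset Strict Implicit. Unset Printing Implicit Defensive.

(* For a transitive relation r on positions, let c(j) be the length of a longest
   r-chain through j and e(j) that of a longest r-chain ending at j.  If p < q and
   r p q, then e(p)/c(p) <= (e(q) - 1)/c(q), so the intervals [(e(j) - 1)/c(j), e(j)/c(j))
   are pairwise disjoint along r-chains.  Any two positions are related either by
   "strictly increasing" or by "non-increasing", hence the rectangles
   I_inc(j) x I_dec(j), of areas 1/(i(x_j) d(x_j)), are pairwise disjoint in the
   unit square.  Areas are compared by counting points of a K x K grid, K = N!. *)

Lemma bigmax_attained (T : finType) (P : pred T) (F : T -> nat) (i0 : T) :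
  P i0 -> exists2 i, P i & \max_(i | P i) F i = F i.
Proof.
move=> Pi0; have /card_gt0P/(eq_bigmax_cond F) [i Pi ->] : exists i, i \in P.
  by exists i0.
by exists i.
Qed.

Section Chains.
Variables (n : nat) (r : rel 'I_n).

Definition chain (A : {set 'I_n}) : bool :=
  [forall p in A, forall q in A, (p < q)%N ==> r p q].

Definition chain_len (j : 'I_n) : nat :=
  \max_(A : {set 'I_n} | (j \in A) && chain A) #|A|.

Definition chain_len_to (j : 'I_n) : nat :=
  \max_(A : {set 'I_n} | [&& j \in A, chain A & [forall p in A, (p <= j)%N]]) #|A|.

Lemma chainP (A : {set 'I_n}) :
  reflect (forall p q, p \in A -> q \in A -> (p < q)%N -> r p q) (chain A).
Proof.
apply: (iffP forall_inP) => [cA p q pA qA | cA p pA].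
  by move/forall_inP: (cA p pA) => /(_ q qA) /implyP.
by apply/forall_inP => q qA; apply/implyP; apply: cA.
Qed.

Lemma chain_set1 (j : 'I_n) : chain [set j].
Proof. by apply/chainP => p q; rewrite !inE => /eqP -> /eqP ->; rewrite ltnn. Qed.

Lemma chainS (A B : {set 'I_n}) : A \subset B -> chain B -> chain A.
Proof. by move=> /subsetP sAB /chainP cB; apply/chainP => p q /sAB pB /sAB; apply: cB. Qed.

Lemma chainU (A B : {set 'I_n}) : chain A -> chain B ->
  (forall p q, p \in A -> q \in B -> (p < q)%N /\ r p q) -> chain (A :|: B).
Proof.
move=> /chainP cA /chainP cB AB; apply/chainP => p q; rewrite !inE.
case/orP=> [pA|pB] /orP[qA|qB] pq.
- exact: cA.
- by case: (AB p q pA qB).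
- by case: (AB q p qA pB) => /(ltn_trans pq); rewrite ltnn.
- exact: cB.
Qed.

Lemma chain_len_to_witness (j : 'I_n) :
  [&& j \in [set j], chain [set j] & [forall p in [set j], (p <= j)%N]].
Proof.
by rewrite set11 chain_set1; apply/forall_inP => p; rewrite inE => /eqP ->.
Qed.

Lemma chain_len_to_gt0 (j : 'I_n) : (0 < chain_len_to j)%N.
Proof. by rewrite -(cards1 j); apply: leq_bigmax_cond; apply: chain_len_to_witness. Qed.

Lemma chain_len_to_le (j : 'I_n) : (chain_len_to j <= chain_len j)%N.
Proof.
by apply/bigmax_leqP => A /and3P[jA cA _]; apply: leq_bigmax_cond; rewrite jA cA.
Qed.

Lemma chain_len_gt0 (j : 'I_n) : (0 < chain_len j)%N.
Proof. exact: leq_trans (chain_len_to_gt0 j) (chain_len_to_le j). Qed.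

Lemma chain_len_le (j : 'I_n) : (chain_len j <= n)%N.
Proof. by apply/bigmax_leqP => A _; rewrite -[leqRHS]card_ord max_card. Qed.

Lemma chain_len_to_attained (j : 'I_n) : exists2 A : {set 'I_n},
  [&& j \in A, chain A & [forall p in A, (p <= j)%N]] & chain_len_to j = #|A|.
Proof. by apply: bigmax_attained; apply: chain_len_to_witness. Qed.

Lemma chain_len_attained (j : 'I_n) :
  exists2 A : {set 'I_n}, (j \in A) && chain A & chain_len j = #|A|.
Proof. by apply: (bigmax_attained _ (i0 := [set j])); rewrite set11 chain_set1. Qed.

End Chains.

Section TransitiveChains.
Variables (n : nat) (r : rel 'I_n).
Hypothesis r_trans : transitive r.

Lemma chain_to_rel (x y : 'I_n) (A : {set 'I_n}) :
  (x < y)%N -> r x y -> x \in A -> chain r A -> (forall p, p \in A -> (p <= x)%N) ->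
  forall p, p \in A -> (p < y)%N /\ r p y.
Proof.
move=> xy rxy xA /chainP cA Ax p pA; split; first exact: leq_ltn_trans (Ax p pA) xy.
have := Ax p pA; rewrite leq_eqVlt => /orP[/eqP/val_inj -> // | px].
exact: r_trans (cA p x pA xA px) rxy.
Qed.

Lemma chain_len_to_lt (x y : 'I_n) :
  (x < y)%N -> r x y -> (chain_len_to r x < chain_len_to r y)%N.
Proof.
move=> xy rxy; have [A /and3P[xA cA /forall_inP Ax] ->] := chain_len_to_attained r x.
have yA : y \notin A by apply/negP => /Ax; rewrite leqNgt xy.
apply: (@leq_trans #|y |: A|); first by rewrite cardsU1 yA.
apply: leq_bigmax_cond.
apply/and3P; split; first exact: setU11.
  rewrite setUC; apply: chainU (chain_set1 r y) _ => // p q pA.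
  by rewrite inE => /eqP ->; apply: chain_to_rel xy rxy xA cA Ax p pA.
apply/forall_inP => p; rewrite !inE => /orP[/eqP -> // | /Ax px].
exact: ltnW (leq_ltn_trans px xy).
Qed.

(* A longest chain through y splits at y into a chain ending at y and a tail
   starting at y; the tail extends any chain ending at x. *)
Lemma chain_len_add_lt (x y : 'I_n) : (x < y)%N -> r x y ->
  (chain_len_to r x + chain_len r y < chain_len r x + chain_len_to r y)%N.
Proof.
move=> xy rxy; have [A /and3P[xA cA /forall_inP Ax] ->] := chain_len_to_attained r x.
have [B /andP[yB cB] ->] := chain_len_attained r y.
set E := [set q in B | (q <= y)%N]; set D := [set q in B | (y <= q)%N].
have E_le : (#|E| <= chain_len_to r y)%N.
  apply: leq_bigmax_cond; rewrite inE yB leqnn /=; apply/andP; split.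
    by apply: chainS cB; apply/subsetP => q; rewrite inE => /andP[].
  by apply/forall_inP => q; rewrite inE => /andP[].
have card_ED : (#|E| + #|D| = #|B| + 1)%N.
  have EUD : E :|: D = B.
    by apply/setP => q; rewrite !inE -andb_orr leq_total andbT.
  have EID : E :&: D = [set y].
    apply/setP => q; rewrite !inE; apply/idP/eqP => [| ->]; last by rewrite yB leqnn.
    by case/andP=> /andP[_ qy] /andP[_ yq]; apply/val_inj/eqP; rewrite eqn_leq qy.
  by rewrite -cardsUI EUD EID cards1.
have card_AD : #|A :|: D| = (#|A| + #|D|)%N.
  apply/eqP; rewrite (leq_card_setU A D).2 -setI_eq0; apply/eqP/setP => q.
  rewrite !inE; apply/negP => /and3P[/Ax qx _ yq].
  by move: (leq_trans yq qx); rewrite leqNgt xy.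
have AD_le : (#|A :|: D| <= chain_len r x)%N.
  apply: leq_bigmax_cond; rewrite inE xA /=; apply: (chainU cA).
    by apply: chainS cB; apply/subsetP => q; rewrite inE => /andP[].
  move=> p q pA; rewrite inE => /andP[qB yq].
  have [py rpy] := chain_to_rel xy rxy xA cA Ax pA.
  split; first exact: leq_trans py yq.
  move: yq; rewrite leq_eqVlt => /orP[/eqP/val_inj <- // | yq].
  by apply: r_trans rpy _; move/chainP: cB; apply.
lia.
Qed.

Lemma chain_len_ratio_le (x y : 'I_n) : (x < y)%N -> r x y ->
  (chain_len_to r x * chain_len r y <= (chain_len_to r y).-1 * chain_len r x)%N.
Proof.
move=> xy rxy; have := chain_len_to_lt xy rxy; have := chain_len_add_lt xy rxy.
have := chain_len_to_le r x.
move: (chain_len_to r x) (chain_len r x) (chain_len_to r y) (chain_len r y) => l m l' m' lm h1 h2.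
have : (m' <= m + l' - l - 1)%N by lia.
move=> /(leq_mul (leqnn l)) /leq_trans; apply.
have : (l * (l' - 1 - l) <= m * (l' - 1 - l))%N by apply: leq_mul.
nia.
Qed.

End TransitiveChains.

Lemma card_ord_interval (K a b : nat) :
  (a <= b <= K)%N -> #|[set t : 'I_K | (a <= t < b)%N]| = (b - a)%N.
Proof.
move=> /andP[ab bK]; rewrite -sum1_card big_mkcond /=.
under eq_bigr do rewrite inE.
suff -> : forall m, \sum_(t < m) (if (a <= t < b)%N then 1 else 0)%N = (minn b m - minn a m)%N.
  by lia.
elim=> [|m IHm]; first by rewrite big_ord0; lia.
by rewrite big_ord_recr /= IHm; case: (leqP a m) => am; case: (ltnP m b) => mb /=; lia.
Qed.

Lemma leq_mul_divn (K a b c d : nat) : (0 < K)%N -> c %| K -> d %| K ->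
  (a * d <= b * c)%N -> (a * (K %/ c) <= b * (K %/ d))%N.
Proof.
move=> K_gt0 /divnK Kc /divnK Kd ad_bc; rewrite -(leq_pmul2r K_gt0).
move: (K %/ c) (K %/ d) Kc Kd => k k' Kc Kd.
have -> : (a * k * K = k * k' * (a * d))%N by rewrite -Kd; ring.
have -> : (b * k' * K = k * k' * (b * c))%N by rewrite -Kc; ring.
exact: leq_mul.
Qed.

Section Slots.
Variables (n K : nat) (r : rel 'I_n).

(* The interval [(e - 1)/c, e/c) of [0, 1), with e = chain_len_to r j and
   c = chain_len r j, discretised with step 1/K. *)
Definition slot (j : 'I_n) : {set 'I_K} :=
  [set t : 'I_K | ((chain_len_to r j).-1 * (K %/ chain_len r j) <= t
                   < chain_len_to r j * (K %/ chain_len r j))%N].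

Hypothesis K_gt0 : (0 < K)%N.
Hypothesis chain_len_dvd : forall j, chain_len r j %| K.

Lemma card_slot (j : 'I_n) : #|slot j| = (K %/ chain_len r j)%N.
Proof.
have lm := chain_len_to_le r j; have l_gt0 := chain_len_to_gt0 r j.
have mk := divnK (chain_len_dvd j); rewrite card_ord_interval; last first.
  rewrite leq_mul2r leq_pred orbT /=.
  by rewrite -[leqRHS]mk mulnC leq_mul2l lm orbT.
by rewrite -mulnBl -subn1 subKn // mul1n.
Qed.

Hypothesis r_trans : transitive r.

Lemma slot_disjoint (x y : 'I_n) : (x < y)%N -> r x y -> [disjoint slot x & slot y].
Proof.
move=> xy rxy; have sep := chain_len_ratio_le r_trans xy rxy.
have sep_scaled := leq_mul_divn K_gt0 (chain_len_dvd x) (chain_len_dvd y) sep.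
rewrite -setI_eq0; apply/eqP/setP => t; rewrite !inE.
apply/negP => /andP[/andP[_ tx] /andP[ty _]].
by move: (leq_ltn_trans (leq_trans sep_scaled ty) tx); rewrite ltnn.
Qed.

End Slots.

Section Boxes.
Variables (n K : nat) (r1 r2 : rel 'I_n).
Hypothesis K_gt0 : (0 < K)%N.
Hypotheses (r1_trans : transitive r1) (r2_trans : transitive r2).
Hypotheses (chain_len1_dvd : forall j, chain_len r1 j %| K)
           (chain_len2_dvd : forall j, chain_len r2 j %| K).
Hypothesis r1_or_r2 : forall x y : 'I_n, (x < y)%N -> r1 x y || r2 x y.

Definition box (j : 'I_n) : {set 'I_K * 'I_K} := setX (slot K r1 j) (slot K r2 j).

Lemma box_disjoint (i j : 'I_n) : i != j -> [disjoint box i & box j].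
Proof.
wlog ij : i j / (i < j)%N.
  move=> W; case: (ltngtP i j) => [/W // | ji _ | /val_inj ->]; last by rewrite eqxx.
  by rewrite disjoint_sym; apply: W => //; rewrite neq_ltn ji.
move=> _; rewrite -setI_eq0; apply/eqP/setP => -[t u]; rewrite in_setI !in_setX in_set0.
apply/negP => /andP[/andP[ti ui] /andP[tj uj]].
case/orP: (r1_or_r2 ij) => [/(slot_disjoint K_gt0 chain_len1_dvd r1_trans ij) D |
                            /(slot_disjoint K_gt0 chain_len2_dvd r2_trans ij) D].
  by rewrite (disjointFr D ti) in tj.
by rewrite (disjointFr D ui) in uj.
Qed.

Lemma sum_divn_chain_len_mul_le :
  (\sum_(j < n) (K %/ chain_len r1 j) * (K %/ chain_len r2 j) <= K * K)%N.
Proof.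
have -> : (\sum_(j < n) (K %/ chain_len r1 j) * (K %/ chain_len r2 j) = #|\bigcup_j box j|)%N.
  rewrite -sum1_card (partition_disjoint_bigcup _ _ box_disjoint).
  by apply: eq_bigr => j _; rewrite sum1_card cardsX !card_slot.
by rewrite -[in K * K](card_ord K) -card_prod max_card.
Qed.

End Boxes.

Local Open Scope ring_scope.

Lemma sum_inv_chain_len_le1 (F : numFieldType) (n : nat) (r1 r2 : rel 'I_n) :
  transitive r1 -> transitive r2 -> (forall x y : 'I_n, (x < y)%N -> r1 x y || r2 x y) ->
  \sum_(j < n) ((chain_len r1 j * chain_len r2 j)%:R)^-1 <= 1 :> F.
Proof.
move=> r1_trans r2_trans r1_or_r2; set K := n`!.
have K_gt0 : (0 < K)%N := fact_gt0 n.
have dvdK (r : rel 'I_n) j : (chain_len r j %| K)%N.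
  by rewrite dvdn_fact // chain_len_gt0 chain_len_le.
have inv_chain_len (r : rel 'I_n) j :
    ((chain_len r j)%:R)^-1 = (K %/ chain_len r j)%:R / K%:R :> F.
  rewrite natr_div ?dvdK ?unitfE ?pnatr_eq0 -?lt0n ?chain_len_gt0 //.
  by rewrite mulrAC divff ?mul1r // pnatr_eq0 -lt0n.
under eq_bigr do rewrite natrM invfM !inv_chain_len mulrACA -natrM -invfM -natrM.
rewrite -mulr_suml -natr_sum ler_pdivrMr ?mul1r ?ler_nat ?ltr0n ?muln_gt0 ?K_gt0 //.
exact: sum_divn_chain_len_mul_le.
Qed.

Theorem corollary11 (R : realType) (S : seq R) :
  \sum_(j < size S) ((ilen j * dlen j)%:R)^-1 <= (1 : R).
Proof.
apply: (@sum_inv_chain_len_le1 R _ (fun p q => nth 0 S p < nth 0 S q)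
                                   (fun p q => nth 0 S q <= nth 0 S p)).
- by move=> y x z; apply: lt_trans.
- by move=> y x z xy yz; apply: le_trans yz xy.
- by move=> x y _; rewrite leNgt orbN.
Qed.
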